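(* Let $p$ be a positive integer, let $J_1,\dots,J_p\in\mathcal{D}(X)$, and let $\ell_1,\dots,\ell_p$ be positive integers. Let $\ell=\min_i\ell_i$, $\bar J_i=T^{\ell_i-\ell}J_i$ for $i=1,\dots,p$, and $\bar J(x)=\min_{i=1,\dots,p}\bar J_i(x)$ for all $x\in X$. Then $\bar J\in\mathcal{D}(X)$.
   Context: Setting: $X$ (state space) and $U$ (control space) are sets; for each $x\in X$, $U(x)\subset U$ is nonempty; $f:X\times U\to X$; the stage cost $g$ satisfies $0\le g(x,u)\le\infty$ for all $x\in X$, $u\in U(x)$. $\mathcal{E}^+(X)$ denotes the set of all functions $J:X\to[0,\infty]$. The Bellman operator $T:\mathcal{E}^+(X)\to\mathcal{E}^+(X)$ is $(TJ)(x)=\inf_{u\in U(x)}\{g(x,u)+J(f(x,u))\}$; $T^k$ is its $k$-fold composition, with $T^0J=J$. The region of decreasing is $\mathcal{D}(X)=\{J\in\mathcal{E}^+(X): (TJ)(x)\le J(x)\ \forall x\in X\}$. Standing assumption: for every $J\in\mathcal{E}^+(X)$ and every $x\in X$, the infimum defining $(TJ)(x)$ is attained. *)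

From mathcomp Require Import all_boot all_order all_algebra.
From mathcomp Require Import boolp classical_sets reals constructive_ereal ereal.
Set Implicit Arguments. Unset Strict Implicit. Unset Printing Implicit Defensive.
Import Order.TTheory GRing.Theory Num.Theory.
Local Open Scope classical_set_scope.
Local Open Scope ereal_scope.

Section DP.
Variables (R : realType) (X U : Type) (Uc : X -> set U) (f : X -> U -> X)
  (g : X -> U -> \bar R).

Definition Eplus (J : X -> \bar R) : Prop := forall x, 0 <= J x.

Definition bellman (J : X -> \bar R) : X -> \bar R :=
  fun x => ereal_inf [set g x u + J (f x u) | u in Uc x].

Definition decreasing_region (J : X -> \bar R) : Prop :=
  Eplus J /\ forall x, bellman J x <= J x.

End DP.

(* minimum of finitely many naturals ls_0, ..., ls_{p-1} (meaningful for p > 0);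
   the seed is the maximum, so the result is the true minimum when p > 0 *)
Definition nat_min (p : nat) (ls : 'I_p -> nat) : nat :=
  (\big[minn/(\big[maxn/0%N]_(i < p) ls i)]_(i < p) ls i)%N.

(* The Bellman operator T is monotone and maps nonnegative functions to
   nonnegative functions, so every iterate T^k J of some J in D(X) stays in
   D(X).  For a pointwise minimum M of members J_i of D(X), monotonicity gives
   T M <= T J_i <= J_i for every i, hence T M <= M.  Neither the shifts
   l_i - l nor the attainment of the infimum in T play any role. *)
From mathcomp Require Import all_boot all_order all_algebra.
From mathcomp Require Import boolp classical_sets reals constructive_ereal ereal.
Import Order.TTheory GRing.Theory Num.Theory.
Local Open Scope classical_set_scope.
Local Open Scope ereal_scope.

Section BellmanDecreasing.
Variables (R : realType) (X U : Type) (Uc : X -> set U) (f : X -> U -> X)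
  (g : X -> U -> \bar R).

Local Notation T := (bellman Uc f g).
Local Notation D := (decreasing_region Uc f g).

Lemma le_bellman {J J' : X -> \bar R} :
  (forall x, J x <= J' x) -> forall x, T J x <= T J' x.
Proof.
move=> leJ x; apply: le_ereal_inf_tmp => _ [u Ucu <-].
apply: le_trans (leeD2l _ (leJ _)).
by apply: ereal_inf_lbound; exists u.
Qed.

Hypothesis g_ge0 : forall x u, Uc x u -> 0 <= g x u.

Lemma bellman_Eplus (J : X -> \bar R) : Eplus J -> Eplus (T J).
Proof.
move=> J_ge0 x; apply: le_ereal_inf_tmp => _ [u Ucu <-].
by rewrite adde_ge0 ?g_ge0.
Qed.

Lemma decreasing_region_iter (J : X -> \bar R) k : D J -> D (iter k T J).
Proof.
move=> DJ; elim: k => [|k [Tk_ge0 Tk_dec]] //=.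
by split; [exact: bellman_Eplus | exact: le_bellman].
Qed.

Lemma decreasing_region_bigmin (I : finType) (P : pred I) (F : I -> X -> \bar R) :
  (forall i, P i -> D (F i)) ->
  D (fun x => \big[Order.min/+oo]_(i | P i) F i x).
Proof.
move=> DF; set M := fun x => _.
have M_le i : P i -> forall x, M x <= F i x by move=> Pi x; exact: bigmin_le_cond.
split=> x; apply: le_bigmin => [|i Pi].
- exact: leey.
- by case: (DF i Pi).
- exact: leey.
- by apply: le_trans (le_bellman (M_le i Pi) x) _; case: (DF i Pi).
Qed.

End BellmanDecreasing.

Theorem corollary2 (R : realType) (X U : Type) (Uc : X -> set U)
  (f : X -> U -> X) (g : X -> U -> \bar R)
  (hUc : forall x, Uc x !=set0)
  (hg : forall x u, Uc x u -> 0 <= g x u)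
  (hattain : forall (J : X -> \bar R), Eplus J -> forall x,
      exists2 u, Uc x u & bellman Uc f g J x = g x u + J (f x u))
  (p : nat) (hp : (0 < p)%N)
  (Js : 'I_p -> X -> \bar R)
  (hJs : forall i, decreasing_region Uc f g (Js i))
  (ls : 'I_p -> nat) (hls : forall i, (0 < ls i)%N) :
  let l := nat_min ls in
  let Jbar_i := fun i : 'I_p => iter (ls i - l)%N (bellman Uc f g) (Js i) in
  let Jbar := fun x => \big[Order.min/+oo]_(i < p) Jbar_i i x in
  decreasing_region Uc f g Jbar.
Proof.
move=> l Jbar_i Jbar.
apply: decreasing_region_bigmin => i _.
exact: decreasing_region_iter.
Qed.
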